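(* Let ten lines in the Euclidean plane be given by polar coordinates $(r_i,\theta_i)$, $i=1,\dots,10$, and write $s_{ij}=\sin(\theta_j-\theta_i)$. Suppose that the triangles $(2,4,6)$, $(1,5,9)$, $(1,5,10)$, $(1,5,7)$ are positively oriented and the triangles $(1,3,7)$, $(1,4,7)$, $(3,5,8)$, $(2,8,9)$, $(6,7,10)$ are negatively oriented, where for each of these nine triangles $(i,j,k)$ we have $0<\theta_i<\theta_j<\theta_k<180$. Then $$s_{89}\,s_{1,10}\,s_{24}\,s_{35}\,s_{67}+s_{46}\,s_{19}\,s_{7,10}\,s_{35}\,s_{28}-s_{46}\,s_{38}\,s_{7,10}\,s_{29}\,s_{15}>0 .$$
   Context: Angles are in degrees. A line with polar coordinates $(r,\theta)$ is the line $\{(p,q)\in\mathbb{R}^2: p\cos\theta+q\sin\theta=r\}$, i.e. $r$ is the perpendicular distance from the origin and $\theta$ is the angle the perpendicular makes with the polar direction. No ordering $\theta_i<\theta_j$ for $i<j$ is assumed except those specified. For three lines $i,j,k$ with $\theta_i<\theta_j<\theta_k$, the triangle $(i,j,k)$ is called positively oriented if $r_i\sin(\theta_k-\theta_j)-r_j\sin(\theta_k-\theta_i)+r_k\sin(\theta_j-\theta_i)>0$ (geometrically: the origin lies in an unbounded face of the arrangement of the three lines bounded by three edges) and negatively oriented if $-r_i\sin(\theta_k-\theta_j)+r_j\sin(\theta_k-\theta_i)-r_k\sin(\theta_j-\theta_i)>0$ (the origin lies in an unbounded face with two edges). *)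

From Stdlib Require Export Reals.
Open Scope R_scope.

Definition sind (x : R) : R := sin (x * PI / 180).

Definition s (th : nat -> R) (i j : nat) : R := sind (th j - th i).

Definition ordered3 (th : nat -> R) (i j k : nat) : Prop :=
  0 < th i /\ th i < th j /\ th j < th k /\ th k < 180.

Definition pos_oriented (r th : nat -> R) (i j k : nat) : Prop :=
  r i * sind (th k - th j) - r j * sind (th k - th i) + r k * sind (th j - th i) > 0.

Definition neg_oriented (r th : nat -> R) (i j k : nat) : Prop :=
  - r i * sind (th k - th j) + r j * sind (th k - th i) - r k * sind (th j - th i) > 0.

(* The orientation value of a triangle (i,j,k) is the determinant of the rows
   (cos θ, sin θ, r) of its three lines, so orientation values satisfy polynomial
   identities.  Multiplied by the orientation value of (1,5,7), the target
   expression is a combination of the other eight orientation values (with signs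
   matching their orientations) whose coefficients are products of sines of
   angle differences in (0,180).  All terms are therefore positive, and so is
   the target. *)
From Stdlib Require Import Lra.
Open Scope R_scope.

Definition orient (r th : nat -> R) (i j k : nat) : R :=
  r i * s th j k - r j * s th i k + r k * s th i j.

Lemma pos_oriented_orient r th i j k :
  pos_oriented r th i j k -> 0 < orient r th i j k.
Proof. exact (fun h => h). Qed.

Lemma neg_oriented_orient r th i j k :
  neg_oriented r th i j k -> 0 < - orient r th i j k.
Proof. unfold neg_oriented, orient, s. lra. Qed.

Lemma sind_pos x : 0 < x < 180 -> 0 < sind x.
Proof.
  intros [x_gt0 x_lt180]. pose proof PI_RGT_0 as PI_gt0.
  unfold sind. apply sin_gt_0.
  - apply Rdiv_lt_0_compat; [apply Rmult_lt_0_compat|]; lra.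
  - apply Rmult_lt_reg_r with 180; [lra|].
    unfold Rdiv. rewrite Rmult_assoc, Rinv_l by lra. nra.
Qed.

Lemma ordered3_s_pos {th i j k} : ordered3 th i j k ->
  0 < s th i j /\ 0 < s th j k /\ 0 < s th i k.
Proof. intros (? & ? & ? & ?). unfold s. repeat split; apply sind_pos; lra. Qed.

Lemma s_sin_cos th i j :
  s th i j = sin (th j * PI / 180) * cos (th i * PI / 180)
           - cos (th j * PI / 180) * sin (th i * PI / 180).
Proof. unfold s, sind. rewrite <- sin_minus. f_equal. unfold Rdiv. ring. Qed.

Lemma orient_certificate r th :
  (s th 8 9 * s th 1 10 * s th 2 4 * s th 3 5 * s th 6 7
   + s th 4 6 * s th 1 9 * s th 7 10 * s th 3 5 * s th 2 8
   - s th 4 6 * s th 3 8 * s th 7 10 * s th 2 9 * s th 1 5) * orient r th 1 5 7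
  = s th 1 5 * s th 3 5 * s th 1 7 * s th 4 6 * s th 7 10 * - orient r th 2 8 9
  + s th 2 8 * s th 3 5 * s th 1 7 * s th 4 6 * s th 7 10 * orient r th 1 5 9
  + s th 2 9 * s th 1 5 * s th 1 7 * s th 4 6 * s th 7 10 * - orient r th 3 5 8
  + s th 8 9 * s th 1 5 * s th 3 5 * s th 1 7 * s th 7 10 * orient r th 2 4 6
  + s th 8 9 * s th 2 4 * s th 1 5 * s th 3 5 * s th 1 7 * - orient r th 6 7 10
  + s th 8 9 * s th 2 4 * s th 6 7 * s th 3 5 * s th 1 7 * orient r th 1 5 10
  + s th 2 9 * s th 5 8 * s th 1 5 * s th 4 6 * s th 7 10 * - orient r th 1 3 7
  + s th 8 9 * s th 2 6 * s th 1 5 * s th 3 5 * s th 7 10 * - orient r th 1 4 7.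
Proof. unfold orient. rewrite !s_sin_cos. ring. Qed.

Theorem theoremt (r th : nat -> R) :
  ordered3 th 2 4 6 -> ordered3 th 1 5 9 -> ordered3 th 1 5 10 ->
  ordered3 th 1 5 7 -> ordered3 th 1 3 7 -> ordered3 th 1 4 7 ->
  ordered3 th 3 5 8 -> ordered3 th 2 8 9 -> ordered3 th 6 7 10 ->
  pos_oriented r th 2 4 6 -> pos_oriented r th 1 5 9 ->
  pos_oriented r th 1 5 10 -> pos_oriented r th 1 5 7 ->
  neg_oriented r th 1 3 7 -> neg_oriented r th 1 4 7 ->
  neg_oriented r th 3 5 8 -> neg_oriented r th 2 8 9 ->
  neg_oriented r th 6 7 10 ->
  s th 8 9 * s th 1 10 * s th 2 4 * s th 3 5 * s th 6 7
  + s th 4 6 * s th 1 9 * s th 7 10 * s th 3 5 * s th 2 8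
  - s th 4 6 * s th 3 8 * s th 7 10 * s th 2 9 * s th 1 5 > 0.
Proof.
  intros O246 O159 O1510 O157 _ _ O358 O289 O6710.
  intros P246%pos_oriented_orient P159%pos_oriented_orient
    P1510%pos_oriented_orient P157%pos_oriented_orient
    N137%neg_oriented_orient N147%neg_oriented_orient
    N358%neg_oriented_orient N289%neg_oriented_orient
    N6710%neg_oriented_orient.
  destruct (ordered3_s_pos O246) as (? & ? & ?).
  destruct (ordered3_s_pos O159) as (? & ? & ?).
  destruct (ordered3_s_pos O157) as (? & ? & ?).
  destruct (ordered3_s_pos O358) as (? & ? & ?).
  destruct (ordered3_s_pos O289) as (? & ? & ?).
  destruct (ordered3_s_pos O6710) as (? & ? & ?).
  apply Rmult_lt_reg_r with (orient r th 1 5 7); [exact P157|].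
  rewrite Rmult_0_l, orient_certificate.
  repeat apply Rplus_lt_0_compat; repeat apply Rmult_lt_0_compat; assumption.
Qed.
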